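(* Let $k\ge 2$, let $n_1,\dots,n_k\ge 3$, and let $t\ge 1$ be an integer with $t\le (n_i-1)(n_{i+1}-1)$ for all $1\le i\le k-1$. Then every graph $H$ in the family $GS_t(K_{n_1},\dots,K_{n_k})$ satisfies $$D(H,x)=\prod_{i=1}^k\big((1+x)^{n_i}-1\big);$$ in particular all graphs in this family have the same domination polynomial.
   Context: All graphs are finite and simple. For a graph $G$, a set $S\subseteq V(G)$ is dominating if every vertex of $V(G)\setminus S$ is adjacent to some vertex of $S$. Let $d(G,i)$ be the number of dominating sets of $G$ of cardinality $i$; the domination polynomial is $D(G,x)=\sum_{i=1}^{|V(G)|} d(G,i)x^i$. The family $GS_t(K_{n_1},\dots,K_{n_k})$: take vertex-disjoint complete graphs $K_{n_1},\dots,K_{n_k}$, where the vertices of $K_{n_i}$ are labelled $w^{(i)}_1,\dots,w^{(i)}_{n_i}$. For each $1\le i\le k-1$, add a set of exactly $t$ edges between $K_{n_i}$ and $K_{n_{i+1}}$, each of the form $w^{(i)}_a w^{(i+1)}_b$ with $1\le a\le n_i-1$ and $1\le b\le n_{i+1}-1$ (so the vertex $w^{(i)}_{n_i}$ of each clique receives no edges outside its clique). No other edges are added. Every graph arising from some choice of these edge sets belongs to $GS_t(K_{n_1},\dots,K_{n_k})$. *)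

From HB Require Import structures.
From mathcomp Require Import all_boot all_order all_algebra.
Set Implicit Arguments. Unset Strict Implicit. Unset Printing Implicit Defensive.
Import GRing.Theory.
Local Open Scope ring_scope.

Definition dominating (T : finType) (adj : rel T) (S : {set T}) : bool :=
  [forall v : T, (v \in S) || [exists u in S, adj u v]].

Definition dom_count (T : finType) (adj : rel T) (i : nat) : nat :=
  #|[set S : {set T} | dominating adj S && (#|S| == i)%N]|.

Definition dom_poly (T : finType) (adj : rel T) : {poly int} :=
  \sum_(1 <= i < #|T|.+1) (dom_count adj i)%:R * 'X^i.

(* Vertices of GS_t(K_{n_0},...,K_{n_{k-1}}): vertex (i, a) is w^{(i+1)}_{a+1}
   (0-indexed cliques and labels). *)
Definition GSvert (k : nat) (n : nat -> nat) : finType := {i : 'I_k & 'I_(n i)}.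

(* E i : the set of edges between clique i and clique i+1, as pairs (a, b)
   meaning the edge w^{(i)}_a w^{(i+1)}_b. *)
Definition GSadj (k : nat) (n : nat -> nat)
    (E : forall i : nat, {set 'I_(n i) * 'I_(n i.+1)}) : rel (GSvert k n) :=
  fun u v =>
    [|| (tag u == tag v) && (val (tagged u) != val (tagged v)),
        ((val (tag v) == (val (tag u)).+1) &&
         [exists p in E (val (tag u)),
            (val p.1 == val (tagged u)) && (val p.2 == val (tagged v))])
      | ((val (tag u) == (val (tag v)).+1) &&
         [exists p in E (val (tag v)),
            (val p.1 == val (tagged v)) && (val p.2 == val (tagged u))])].

Definition GSvalid (k : nat) (n : nat -> nat) (t : nat)
    (E : forall i : nat, {set 'I_(n i) * 'I_(n i.+1)}) : Prop :=
  forall i : nat, (i.+1 < k)%N ->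
    #|E i| = t /\
    (forall p, p \in E i -> ((val p.1).+1 < n i)%N /\ ((val p.2).+1 < n i.+1)%N).

From HB Require Import structures.
From mathcomp Require Import all_boot all_order all_algebra.
Set Implicit Arguments. Unset Strict Implicit. Unset Printing Implicit Defensive.
Import GRing.Theory.
Local Open Scope ring_scope.

(* A vertex set dominates the graph iff it meets every clique: a clique is
   dominated by any one of its vertices, while the last vertex of a clique has
   no neighbour outside it.  Summing x^|S| over the sets meeting every block
   of a partition factorises over the blocks, a block of size m contributing
   the sum over its nonempty subsets, (1 + x)^m - 1. *)

Lemma sum_subsets_expr_card (R : comPzRingType) (T : finType) (C : {set T}) (x : R) :
  \sum_(A : {set T} | A \subset C) x ^+ #|A| = (x + 1) ^+ #|C|.
Proof.
have -> : (x + 1) ^+ #|C| = \prod_(i : T) ((i \in C)%:R * x + 1).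
  rewrite -prodr_const [RHS](bigID (mem C)) /= [X in _ * X]big1 ?mulr1.
    by apply: eq_bigr => i ->; rewrite mul1r.
  by move=> i /negbTE ->; rewrite mul0r add0r.
rewrite bigA_distr big_mkcond /=; apply: eq_bigr => A _.
rewrite -big_mkcond /=.
have [sAC | /subsetPn[i iA iC]] := boolP (A \subset C).
  by rewrite -prodr_const; apply: eq_bigr => i iA; rewrite (subsetP sAC _ iA) mul1r.
by rewrite (bigD1 i) //= (negbTE iC) !mul0r.
Qed.

Lemma sum_nonempty_subsets_expr_card (R : comPzRingType) (T : finType) (C : {set T})
    (x : R) :
  \sum_(A : {set T} | (A \subset C) && (A != set0)) x ^+ #|A| = (x + 1) ^+ #|C| - 1.
Proof.
by rewrite -sum_subsets_expr_card [in RHS](bigD1 set0) ?sub0set //= cards0 expr0 addrC addrK.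
Qed.

Lemma sum_hitting_fibres_expr_card (R : comPzRingType) (T I : finType) (c : T -> I)
    (x : R) :
  \sum_(S : {set T} | [forall i, S :&: c @^-1: [set i] != set0]) x ^+ #|S|
  = \prod_i ((x + 1) ^+ #|c @^-1: [set i]| - 1).
Proof.
set C := fun i => c @^-1: [set i].
have inC y i : (y \in C i) = (c y == i) by rewrite !inE.
under eq_bigr do rewrite -sum_nonempty_subsets_expr_card.
rewrite bigA_distr_big_dep /=.
(* [S] is determined by its traces on the fibres, which are arbitrary nonempty subsets. *)
pose traces (S : {set T}) := [ffun i => S :&: C i].
pose glue (f : {ffun I -> {set T}}) := \bigcup_i f i.
have glueK S : glue (traces S) = S.
  apply/setP => y; apply/bigcupP/idP => [[i _]|yS]; first by rewrite ffunE inE => /andP[].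
  by exists (c y) => //; rewrite ffunE !inE yS /=.
rewrite (reindex traces) /=; last first.
  exists glue => [S _|f]; first by rewrite glueK.
  rewrite inE => /familyP f_sub; apply/ffunP => i; rewrite ffunE.
  apply/setP => y; rewrite inE inC; apply/andP/idP => [[/bigcupP[j _ yfj] /eqP cy]|yfi].
    have /andP[/subsetP fjC _] := f_sub j.
    by move: (fjC _ yfj); rewrite inC cy => /eqP->.
  have /andP[/subsetP fiC _] := f_sub i.
  by split; [apply/bigcupP; exists i | rewrite -inC fiC].
apply: eq_big => [S|S _].
  apply/forallP/familyP => S_hits i; first by rewrite ffunE unfold_in /= subsetIr S_hits.
  by have := S_hits i; rewrite ffunE unfold_in => /andP[].
rewrite prodrXr -sum1_card (partition_big c xpredT) //=.
congr (x ^+ _); apply: eq_bigr => i _; rewrite ffunE -sum1_card.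
by apply: eq_bigl => y; rewrite inE inC.
Qed.

(* [dom_poly] has no constant term, so the empty set must not dominate:
   hence the vertex [v0]. *)
Lemma dom_poly_sum_dominating (T : finType) (adj : rel T) (v0 : T) :
  dom_poly adj = \sum_(S | dominating adj S) 'X^#|S|.
Proof.
have dom_gt0 S : dominating adj S -> (0 < #|S|)%N.
  move=> /forallP /(_ v0) /orP[v0S | /existsP[u /andP[uS _]]];
    by rewrite card_gt0; apply/set0Pn; eexists; eassumption.
have coef_dominating S : dominating adj S ->
    \sum_(1 <= i < #|T|.+1) ((#|S| == i)%:R * 'X^i : {poly int}) = 'X^#|S|.
  move=> S_dom; rewrite (bigD1_seq #|S|) /= ?iota_uniq //; last first.
    by rewrite mem_index_iota dom_gt0 // ltnS max_card.
  rewrite eqxx mul1r big1 ?addr0 // => i /negbTE.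
  by rewrite eq_sym => ->; rewrite mul0r.
rewrite [RHS](eq_bigr _ (fun S S_dom => esym (coef_dominating S S_dom))).
rewrite exchange_big /=; apply: eq_bigr => i _; rewrite -mulr_suml; congr (_ * _).
rewrite -natr_sum /dom_count -sum1_card; congr (_%:R).
rewrite [LHS]big_mkcond [RHS]big_mkcond; apply: eq_bigr => S _.
by rewrite inE; case: (dominating adj S); case: eqP.
Qed.

Section CliqueCover.

Variables (T I : finType) (adj : rel T) (c : T -> I).
Hypothesis adj_fibre : forall u v, c u = c v -> u != v -> adj u v.
Hypothesis fibre_private : forall i, exists2 w, c w = i & forall u, adj u w -> c u = i.

Lemma dominating_hits_fibres (S : {set T}) :
  dominating adj S = [forall i, S :&: c @^-1: [set i] != set0].
Proof.
apply/forallP/forallP => [S_dom i | S_hits v].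
  have [w cw w_private] := fibre_private i.
  apply/set0Pn; case/orP: (S_dom w) => [wS | /existsP[u /andP[uS /w_private cu]]].
    by exists w; rewrite !inE wS cw /=.
  by exists u; rewrite !inE uS cu /=.
have [vS | vNS] := boolP (v \in S); first by apply/orP; left.
have /set0Pn[u] := S_hits (c v); rewrite !inE => /andP[uS /eqP cu].
apply/orP; right; apply/existsP; exists u; rewrite uS adj_fibre //.
by apply: contraNneq vNS => <-.
Qed.

End CliqueCover.

Section GSGraph.

Variables (k : nat) (n : nat -> nat) (t : nat).
Variable E : forall i : nat, {set 'I_(n i) * 'I_(n i.+1)}.
Hypothesis E_valid : @GSvalid k n t E.
Hypothesis n_gt0 : forall i, (i < k)%N -> (0 < n i)%N.

Lemma GSadj_clique (u v : GSvert k n) : tag u = tag v -> u != v -> @GSadj k n E u v.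
Proof.
case: u v => [i a] [j b] /= eij; subst j => neq_ab.
by rewrite /GSadj /= eqxx; apply/orP; left; apply: contraNneq neq_ab => /val_inj ->.
Qed.

Lemma GSadj_last_private (i : 'I_k) :
  exists2 w : GSvert k n, tag w = i & forall u, @GSadj k n E u w -> tag u = i.
Proof.
have last_lt : ((n i).-1 < n i)%N by rewrite prednK // n_gt0.
have last_lt_false : ((n i).-1.+1 < n i)%N = false by rewrite prednK ?ltnn // n_gt0.
exists (Tagged (fun j : 'I_k => 'I_(n j)) (Ordinal last_lt)) => // -[j b].
rewrite /GSadj /= => /or3P[/andP[/eqP ji _] //
  | /andP[/eqP ei /existsP[p /andP[pE /andP[_ /eqP p2]]]]
  | /andP[/eqP ej /existsP[p /andP[pE /andP[/eqP p1 _]]]]].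
- have jk : (j.+1 < k)%N by rewrite -ei.
  have [_ /(_ _ pE)[_]] := E_valid jk.
  by rewrite [val p.2]p2 -ei last_lt_false.
- have ik : (i.+1 < k)%N by rewrite -ej.
  have [_ /(_ _ pE)[]] := E_valid ik.
  by rewrite [val p.1]p1 last_lt_false.
Qed.

Lemma card_GSclique (i : 'I_k) : #|(tag : GSvert k n -> 'I_k) @^-1: [set i]| = n i.
Proof.
have -> : (tag : GSvert k n -> 'I_k) @^-1: [set i] =
          [set Tagged (fun j : 'I_k => 'I_(n j)) a | a : 'I_(n i)].
  apply/setP => y; rewrite !inE; apply/eqP/imsetP => [|[a _ ->]] //.
  by case: y => j a /= eji; subst j; exists a.
by rewrite card_imset ?card_ord //; apply: eq_from_Tagged.
Qed.

End GSGraph.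

(* The hypotheses on [t] only ensure that the family is nonempty: the
   domination polynomial is the same for every choice of edges avoiding the
   last vertices of the cliques. *)
Theorem mainTheorem8 (k : nat) (n : nat -> nat) (t : nat)
    (hk : (2 <= k)%N)
    (hn : forall i : nat, (i < k)%N -> (3 <= n i)%N)
    (ht : (1 <= t)%N)
    (htn : forall i : nat, (i.+1 < k)%N -> (t <= (n i - 1) * (n i.+1 - 1))%N)
    (E : forall i : nat, {set 'I_(n i) * 'I_(n i.+1)})
    (hE : @GSvalid k n t E) :
  dom_poly (@GSadj k n E) = \prod_(i < k) (('X + 1) ^+ (n i) - 1).
Proof.
have n_gt0 i : (i < k)%N -> (0 < n i)%N by move=> /hn; apply: leq_trans.
have private := GSadj_last_private hE n_gt0.
have [v0 _ _] := private (Ordinal (leq_trans (isT : (0 < 2)%N) hk)).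
rewrite (dom_poly_sum_dominating _ v0).
rewrite (eq_bigl _ _ (dominating_hits_fibres (@GSadj_clique k n E) private)).
rewrite sum_hitting_fibres_expr_card.
by apply: eq_bigr => i _; rewrite card_GSclique.
Qed.
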